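(* In the hierarchical partition construction described in the context, every set $S^*\in\mathcal S_j$ (for $j\ge1$) has at most $\lambda^{3+\eta}$ children, i.e. at most $\lambda^{3+\eta}$ sets $S\in\mathcal S_{j-1}$ satisfy $S\subseteq S^*$.
   Context: Let $(V,d)$ be a finite metric space with $|V|\ge 2$ which is doubling with constant $\lambda$: for every $v\in V$ and $r>0$ the open ball $B_{2r}(v)=\{u:d(u,v)<2r\}$ is contained in the union of at most $\lambda$ open balls $B_r(w)$, $w\in V$. Fix an integer $\eta\ge2$ and a real $\tau$ with $1+\frac{1}{2^{\eta-1}-1}\le\tau\le 2^{\eta}$. For $L\subseteq V$ and $r>0$, a greedy partition of $L$ with parameter $r$ is obtained by: set $L_0=L$; while $L_i\ne\emptyset$ choose any $v_i\in L_i$, let $P_i=\{u\in L_i: d(u,v_i)<2^{-\eta-1}r\}$ with leader $v_i$, and set $L_{i+1}=L_i\setminus P_i$. Hierarchical partition construction: choose $r_0$ with $0<r_0<\min_{u\ne v}d(u,v)$ and put $r_j=\tau^j r_0$. Let $\mathcal S_0=\{\{v\}:v\in V\}$, the leader of $\{v\}$ being $v$. While $\mathcal S_j$ has more than one element: let $L_j$ be the set of leaders of the sets in $\mathcal S_j$, let $\mathcal S'_{j+1}$ be a greedy partition of $L_j$ with parameter $2r_{j+1}$, and let $\mathcal S_{j+1}$ consist, for each $P\in\mathcal S'_{j+1}$, of the set $\bigcup\{S\in\mathcal S_j:\mathrm{leader}(S)\in P\}$, whose leader is defined to be the leader of $P$. Each $\mathcal S_j$ is a partition of $V$; $S\in\mathcal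 S_{j-1}$ is a child of $S^*\in\mathcal S_{j}$ if $S\subseteq S^*$. *)

From HB Require Import structures.
From mathcomp Require Import all_boot all_order all_algebra.
Set Implicit Arguments. Unset Strict Implicit. Unset Printing Implicit Defensive.
Import Order.TTheory GRing.Theory Num.Theory.
Local Open Scope ring_scope.

Section Defs.
Variables (T : finType) (R : realFieldType) (d : T -> T -> R) (eta : nat).

Definition is_metric : Prop :=
  [/\ forall u v, 0 <= d u v,
      forall u v, (d u v = 0) <-> (u = v),
      forall u v, d u v = d v u
    & forall u v w, d u w <= d u v + d v w].

Definition doubling (lambda : nat) : Prop :=
  forall (v : T) (r : R), 0 < r ->
    exists W : seq T, (size W <= lambda)%N /\
      forall u, d u v < 2 * r -> exists2 w, w \in W & d u w < r.

Definition gpart (L : {set T}) (r : R) (v : T) : {set T} :=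
  [set u in L | d u v < r / 2 ^+ eta.+1].

(* greedy r L G : G is a greedy partition of L with parameter r, given as the
   list of (part, leader) pairs in the order they are produced *)
Inductive greedy (r : R) : {set T} -> seq ({set T} * T) -> Prop :=
| greedy_nil : greedy r set0 [::]
| greedy_cons (L : {set T}) (v : T) rest :
    v \in L -> greedy r (L :\: gpart L r v) rest ->
    greedy r L ((gpart L r v, v) :: rest).

(* a level of the hierarchy: list of (set, leader) pairs *)
Definition leaders (S : seq ({set T} * T)) : {set T} := [set x.2 | x in S].

Definition level0 : seq ({set T} * T) := [seq ([set v], v) | v <- enum T].

(* one step of the hierarchical construction with radius rj1 = r_{j+1} *)
Definition hier_step (rj1 : R) (Sj Sj1 : seq ({set T} * T)) : Prop :=
  exists G, greedy (2 * rj1) (leaders Sj) G /\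
    Sj1 = [seq (\bigcup_(x <- Sj | x.2 \in pv.1) (x.1 : {set T}), pv.2) | pv : {set T} * T <- G].

Definition children (Sprev : seq ({set T} * T)) (Sstar : {set T}) : {set {set T}} :=
  [set S in [seq x.1 | x : {set T} * T <- Sprev] | S \subset Sstar].

End Defs.

From HB Require Import structures.
From mathcomp Require Import all_boot all_order all_algebra.
Import Order.TTheory GRing.Theory Num.Theory.
Local Open Scope ring_scope.
Set Implicit Arguments. Unset Strict Implicit.

(* Write r_i = tau^i r0.  Level i + 1 is obtained from a greedy partition of
   the leaders of level i with parameter 2 r_(i+1), whose parts are balls of
   radius 2 r_(i+1) / 2^(eta+1) = r_(i+1) / 2^eta around leaders that are
   r_(i+1) / 2^eta apart.  Hence the leaders of every level i are
   r_i / 2^eta-separated (level 0 is even r0-separated).  A set S* of level j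
   is the union of the sets of level j - 1 whose leaders fall into one
   greedy part; as the leader of a set determines it, its children are at
   most as many as the r_(j-1) / 2^eta-separated leaders inside a ball of
   radius r_j / 2^eta.  Since tau <= 2^eta, a packing argument (eta + 1
   halvings of the radius, each costing a factor lambda by doubling) bounds
   this number by lambda^(eta+1) <= lambda^(3+eta). *)

Lemma mem_bigcup_seqP (I T : finType) (s : seq I) (P : pred I) (F : I -> {set T}) u :
  reflect (exists2 x, (x \in s) && P x & u \in F x) (u \in \bigcup_(x <- s | P x) F x).
Proof.
rewrite -big_filter bigcup_seq.
by apply: (iffP bigcupP) => -[x xs ux]; exists x; rewrite // mem_filter andbC in xs *.
Qed.

Lemma card_bigcup_seq_le (I T : finType) (r : seq I) (F : I -> {set T}) :
  (#|\bigcup_(i <- r) F i| <= \sum_(i <- r) #|F i|)%N.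
Proof.
apply: (big_ind2 (fun (A : {set T}) n => #|A| <= n)%N) => //; first by rewrite cards0.
by move=> A m B n Am Bn; apply: leq_trans (leq_card_setU A B) (leq_add Am Bn).
Qed.

Lemma mul2_divXS (R : realFieldType) (x : R) n : 2 * x / 2 ^+ n.+1 = x / 2 ^+ n.
Proof. by rewrite exprS -mulf_div divff ?mul1r ?pnatr_eq0. Qed.

(* Radii grow by [tau <= 2^n] per level, so twice the radius of the next
   level is within [n + 1] doublings of the current one. *)
Lemma radius_growth (R : realFieldType) (tau c : R) n :
  0 <= c -> tau <= 2 ^+ n -> 2 * (tau * c) <= c * 2 ^+ n.+1.
Proof.
move=> c_ge0 tau_le; rewrite exprS (mulrC c) -[X in _ <= X]mulrA.
by rewrite ler_pM2l ?ltr0Sn // ler_wpM2r.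
Qed.

Section Packing.
Variables (T : finType) (R : realFieldType) (d : T -> T -> R).
Hypothesis d_metric : is_metric d.

Lemma metric_sym u v : d u v = d v u.
Proof. by case: d_metric. Qed.

Lemma metric_self u : d u u = 0.
Proof. by case: d_metric => _ d_eq0 _ _; apply/d_eq0. Qed.

Lemma metric_triangle u v w : d u w <= d u v + d v w.
Proof. by case: d_metric. Qed.

Definition separated (P : {set T}) (s : R) : Prop :=
  forall u w, u \in P -> w \in P -> u != w -> s <= d u w.

Lemma separatedS (P Q : {set T}) s : Q \subset P -> separated P s -> separated Q s.
Proof. by move=> /subsetP QP sepP u w /QP uP /QP wP; apply: sepP. Qed.

Lemma separatedW (P : {set T}) s s' : s' <= s -> separated P s -> separated P s'.
Proof. by move=> s's sepP u w uP wP uw; apply: le_trans s's (sepP u w uP wP uw). Qed.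

Lemma ball_diameter v rho u w : d u v < rho -> d w v < rho -> d u w < 2 * rho.
Proof.
move=> uv wv; apply: le_lt_trans (metric_triangle u v w) _.
by rewrite mulr2n mulrDl mul1r ltrD // metric_sym.
Qed.

Variable lambda : nat.
Hypothesis d_doubling : doubling d lambda.

(* Each doubling
   step covers the ball by [lambda] balls of half the radius. *)
Lemma packing k v rho s (P : {set T}) :
  0 < rho -> (forall u, u \in P -> d u v < rho) -> separated P s ->
  2 * rho <= s * 2 ^+ k -> (#|P| <= lambda ^ k)%N.
Proof.
elim: k v rho P => [|k IHk] v rho P rho_gt0 P_ball P_sep.
  rewrite expr0 mulr1 expn0 => diam_le; apply/card_le1_eqP => u w uP wP.
  apply/eqP; apply: contraT => uw; have := P_sep w u wP uP uw.
  by rewrite leNgt (lt_le_trans (ball_diameter (P_ball w wP) (P_ball u uP))).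
move=> diam_le; have halfK : 2 * (rho / 2) = rho by rewrite mulrC divfK ?pnatr_eq0.
have [W [W_size W_cover]] := d_doubling v (divr_gt0 rho_gt0 (ltr0Sn _ 1)).
pose piece w := [set u in P | d u w < rho / 2].
have P_pieces : P \subset \bigcup_(w <- W) piece w.
  apply/subsetP => u uP; have [|w wW uw] := W_cover u; first by rewrite halfK P_ball.
  by apply/mem_bigcup_seqP; exists w; rewrite ?wW // inE uP.
have piece_card w : (#|piece w| <= lambda ^ k)%N.
  apply: (IHk w (rho / 2)); first by rewrite divr_gt0.
  - by move=> u; rewrite inE => /andP[].
  - by apply: separatedS P_sep; apply/subsetP => u; rewrite inE => /andP[].
  - by rewrite halfK -(ler_pM2l (ltr0Sn _ 1)) mulrCA -exprS.
apply: leq_trans (subset_leq_card P_pieces) _.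
apply: leq_trans (card_bigcup_seq_le _ _) _.
apply: leq_trans (leq_sum _ (fun w _ => piece_card w)) _.
by rewrite big_const_seq count_predT iter_addn_0 expnS mulnC leq_mul2r W_size orbT.
Qed.

End Packing.

Section Greedy.
Variables (T : finType) (R : realFieldType) (d : T -> T -> R) (eta : nat).
Hypothesis d_metric : is_metric d.
Variable r : R.
Hypothesis r_gt0 : 0 < r.

Lemma greedy_part L G pv : greedy d eta r L G -> pv \in G ->
  [/\ pv.2 \in pv.1, pv.1 \subset L & forall u, u \in pv.1 -> d u pv.2 < r / 2 ^+ eta.+1].
Proof.
move=> gG; elim: gG pv => [|L' v rest vL _ IH] pv; first by rewrite in_nil.
rewrite inE => /orP[/eqP -> /=|/IH [leader_in /subsetP sub ball]].
  split; first by rewrite inE vL metric_self // divr_gt0 // exprn_gt0.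
  - by apply/subsetP => u; rewrite inE => /andP[].
  - by move=> u; rewrite inE => /andP[].
by split=> //; apply/subsetP => u /sub; rewrite inE => /andP[].
Qed.

Lemma greedy_rest L v rest pv u : greedy d eta r (L :\: gpart d eta L r v) rest ->
  pv \in rest -> u \in pv.1 -> u \in L :\: gpart d eta L r v.
Proof. by move=> g_rest /(greedy_part g_rest) [_ /subsetP sub _] /sub. Qed.

Lemma greedy_disjoint L G pv qv u : greedy d eta r L G ->
  pv \in G -> qv \in G -> u \in pv.1 -> u \in qv.1 -> pv = qv.
Proof.
move=> gG; elim: gG pv qv => [|L' v rest _ g_rest IH] pv qv; first by rewrite in_nil.
rewrite !inE => /orP[/eqP ->|p_rest] /orP[/eqP ->|q_rest] up uq //.
- by move: (greedy_rest g_rest q_rest uq); rewrite inE up.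
- by move: (greedy_rest g_rest p_rest up); rewrite inE uq.
- exact: IH p_rest q_rest up uq.
Qed.

(* The leaders of a greedy partition are [r / 2^(eta+1)]-separated: a later
   leader was not captured by the part of an earlier one. *)
Lemma greedy_separated L G : greedy d eta r L G ->
  separated d [set pv.2 | pv in G] (r / 2 ^+ eta.+1).
Proof.
have far L' v w : w \in L' :\: gpart d eta L' r v -> r / 2 ^+ eta.+1 <= d w v.
  by rewrite !inE => /andP[/nandP[/negP//|]]; rewrite -leNgt.
move=> gG; elim: gG => [|L' v rest _ g_rest IH] u w.
  by move=> /imsetP [pv]; rewrite in_nil.
have rest_far pv : pv \in rest -> r / 2 ^+ eta.+1 <= d pv.2 v.
  by move=> p_rest; apply/far/(greedy_rest g_rest p_rest); case: (greedy_part g_rest p_rest).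
move=> /imsetP [pv + ->] /imsetP [qv + ->].
rewrite !inE => /orP[/eqP ->|p_rest] /orP[/eqP ->|q_rest] //=; first by rewrite eqxx.
- by rewrite metric_sym //; move=> _; apply: rest_far.
- by move=> _; apply: rest_far.
- by apply: IH; apply: imset_f.
Qed.

End Greedy.

Section Levels.
Variables (T : finType) (R : realFieldType) (d : T -> T -> R) (eta : nat).
Hypothesis d_metric : is_metric d.

Definition well_led (Si : seq ({set T} * T)) : Prop :=
  [/\ forall x, x \in Si -> x.2 \in x.1,
      forall x y u, x \in Si -> y \in Si -> u \in x.1 -> u \in y.1 -> x.2 = y.2
    & forall x y, x \in Si -> y \in Si -> x.2 = y.2 -> x.1 = y.1].

Lemma level0_well_led : well_led (level0 T).
Proof.
split.
- by move=> x /mapP [v _ ->]; rewrite set11.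
- by move=> x y u /mapP [v _ ->] /mapP [w _ ->]; rewrite !inE => /eqP -> /eqP.
- by move=> x y /mapP [v _ ->] /mapP [w _ ->] /= ->.
Qed.

Lemma level0_separated r0 : (forall u v : T, u != v -> r0 < d u v) ->
  separated d (leaders (level0 T)) r0.
Proof. by move=> r0_sep u w _ _ uw; apply/ltW/r0_sep. Qed.

Lemma leaders_step Si G : leaders
  [seq (\bigcup_(x <- Si | x.2 \in pv.1) x.1, pv.2) | pv : {set T} * T <- G] =
  [set pv.2 | pv in G].
Proof.
apply/setP => v; apply/imsetP/imsetP => -[x].
  by move=> /mapP [pv pG ->] ->; exists pv.
by move=> xG ->; exists (\bigcup_(y <- Si | y.2 \in x.1) y.1, x.2); rewrite ?map_f.
Qed.

Lemma hier_step_well_led r Si Si1 :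
  0 < r -> well_led Si -> hier_step d eta r Si Si1 -> well_led Si1.
Proof.
move=> r_gt0 [leader_in same_leader leader_set] [G [gG ->]].
have r2_gt0 : 0 < 2 * r by rewrite mulr_gt0.
have part := greedy_part d_metric r2_gt0 gG.
have disj := greedy_disjoint d_metric r2_gt0 gG.
split.
- move=> z /mapP [pv pG ->] /=; have [v_in /subsetP v_L _] := part _ pG.
  have /imsetP [x xSi v_x] := v_L _ v_in.
  apply/mem_bigcup_seqP; exists x; first by rewrite xSi -v_x.
  by rewrite v_x leader_in.
- move=> z z' u /mapP [pv pG ->] /mapP [qv qG ->] /=.
  move=> /mem_bigcup_seqP [x /andP[xSi xp] ux] /mem_bigcup_seqP [y /andP[ySi yq] uy].
  by rewrite (disj _ _ _ pG qG xp) // (same_leader _ _ _ xSi ySi ux uy).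
- move=> z z' /mapP [pv pG ->] /mapP [qv qG ->] /= same.
  have [p_in _ _] := part _ pG; have [q_in _ _] := part _ qG.
  by rewrite (disj _ _ _ pG qG p_in) // same.
Qed.

Lemma hier_step_separated r Si Si1 :
  0 < r -> hier_step d eta r Si Si1 -> separated d (leaders Si1) (r / 2 ^+ eta).
Proof.
move=> r_gt0 [G [gG ->]]; rewrite leaders_step -mul2_divXS.
by apply: (greedy_separated d_metric _ gG); rewrite mulr_gt0.
Qed.

Variable lambda : nat.
Hypothesis d_doubling : doubling d lambda.

(* A child of a set built with radius [r] is determined by its leader, a
   leader of the previous level lying in one greedy part, i.e. in an
   [s]-separated subset of a ball of radius [r / 2^eta]; so packing applies. *)
Lemma children_card r s k Sprev Snext (Sstar : {set T}) :
  0 < r -> well_led Sprev -> separated d (leaders Sprev) s ->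
  hier_step d eta r Sprev Snext -> 2 * (r / 2 ^+ eta) <= s * 2 ^+ k ->
  Sstar \in [seq x.1 | x <- Snext] -> (#|children Sprev Sstar| <= lambda ^ k)%N.
Proof.
move=> r_gt0 [leader_in same_leader leader_set] Sprev_sep [G [gG ->]] radii.
move=> /mapP [z /mapP [pv pG ->] ->] /=.
have r2_gt0 : 0 < 2 * r by rewrite mulr_gt0.
have [_ pv_L pv_ball] := greedy_part d_metric r2_gt0 gG pG.
pose set_of (v : T) : {set T} :=
  if [pick x | (x \in Sprev) && (x.2 == v)] is Some x then x.1 else set0.
have children_led : children Sprev (\bigcup_(x <- Sprev | x.2 \in pv.1) x.1)
    \subset set_of @: pv.1.
  apply/subsetP => S; rewrite inE => /andP [/mapP [x xS ->] /subsetP x_sub].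
  have /x_sub /mem_bigcup_seqP [y /andP [yS yp] xy] := leader_in _ xS.
  apply/imsetP; exists x.2; first by rewrite (same_leader _ _ _ xS yS (leader_in _ xS) xy).
  rewrite /set_of; case: pickP => [x' /andP [x'S /eqP same]|/(_ x)]; last by rewrite xS eqxx.
  by rewrite (leader_set _ _ x'S xS same).
apply: leq_trans (subset_leq_card children_led) _.
apply: leq_trans (leq_imset_card _ _) _.
apply: (packing d_metric d_doubling (v := pv.2) _ _ _ radii).
- by rewrite divr_gt0 // exprn_gt0.
- by move=> u /pv_ball; rewrite mul2_divXS.
- exact: separatedS pv_L Sprev_sep.
Qed.

End Levels.

Theorem lemma5 (T : finType) (R : realFieldType) (d : T -> T -> R)
    (lambda eta : nat) (tau r0 : R)
    (S : nat -> seq ({set T} * T)) (j : nat) :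
  is_metric d ->
  (1 < #|T|)%N ->
  doubling d lambda ->
  (2 <= eta)%N ->
  1 + 1 / (2 ^+ eta.-1 - 1) <= tau -> tau <= 2 ^+ eta ->
  0 < r0 -> (forall u v : T, u != v -> r0 < d u v) ->
  S 0%N = level0 T ->
  (forall i, (i < j)%N ->
     (1 < size (S i))%N /\ hier_step d eta (tau ^+ i.+1 * r0) (S i) (S i.+1)) ->
  (1 <= j)%N ->
  forall Sstar : {set T}, Sstar \in [seq x.1 | x <- S j] ->
    (#|children (S j.-1) Sstar| <= lambda ^ (3 + eta))%N.
Proof.
move=> d_metric _ d_doubling _ tau_ge tau_le r0_gt0 r0_sep S0 step j_gt0.
have pow2_gt0 n : (0 : R) < 2 ^+ n by rewrite exprn_gt0.
have tau_gt0 : 0 < tau.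
  apply: lt_le_trans ltr01 (le_trans _ tau_ge).
  by rewrite lerDl divr_ge0 // subr_ge0 exprn_ege1 // ler1n.
have r_gt0 i : 0 < tau ^+ i * r0 by rewrite mulr_gt0 // exprn_gt0.
have inv i : (i < j)%N ->
    well_led (S i) /\ separated d (leaders (S i)) (tau ^+ i * r0 / 2 ^+ eta).
  elim: i => [|i IHi] lt_ij.
    rewrite S0 expr0 mul1r; split; first exact: level0_well_led.
    apply: separatedW (level0_separated r0_sep).
    by rewrite ler_pdivrMr // ler_peMr ?(ltW r0_gt0) ?exprn_ege1 ?ler1n.
  have [_ stepi] := step i (ltnW lt_ij).
  split; first exact: (hier_step_well_led d_metric (r_gt0 i.+1) (IHi (ltnW lt_ij)).1 stepi).
  exact: (hier_step_separated d_metric (r_gt0 i.+1) stepi).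
case: j j_gt0 step inv => // k _ step inv Sstar Sstar_in /=.
have [Sk_led Sk_sep] := inv k (ltnSn k).
have [_ stepk] := step k (ltnSn k).
have radii : 2 * (tau ^+ k.+1 * r0 / 2 ^+ eta) <= tau ^+ k * r0 / 2 ^+ eta * 2 ^+ eta.+1.
  rewrite [_ ^+ k.+1 * r0 / _](_ : _ = tau * (tau ^+ k * r0 / 2 ^+ eta)).
    by apply: radius_growth tau_le; rewrite ltW // divr_gt0.
  by rewrite exprS !mulrA.
have exponent_le : (lambda ^ eta.+1 <= lambda ^ (3 + eta))%N.
  by case: (lambda) => [|l]; rewrite ?exp0n // leq_pexp2l // -add1n leq_add2r.
apply: leq_trans exponent_le.
exact: (children_card d_metric d_doubling (r_gt0 _) Sk_led Sk_sep stepk radii Sstar_in).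
Qed.
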